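(* Let $\mathcal{S}$ be a state space and let $\mathsf{M}^{(1)},\mathsf{M}^{(2)}$ be dichotomic measurements on $\mathcal{S}$ with outcomes $\{+,-\}$. Then $\mathsf{M}^{(1)}$ and $\mathsf{M}^{(2)}$ are maximally incompatible if and only if $\bar P(\mathsf{M}^{(1)},\mathsf{M}^{(2)})=1$ with optimal states that can be chosen affinely dependent, i.e., if and only if there exist affinely dependent states $s_1,s_2,s_3,s_4\in\mathcal{S}$ with $\mathsf{M}^{(1)}_+(s_1)=\mathsf{M}^{(1)}_+(s_2)=1$, $\mathsf{M}^{(1)}_+(s_3)=\mathsf{M}^{(1)}_+(s_4)=0$, $\mathsf{M}^{(2)}_+(s_1)=\mathsf{M}^{(2)}_+(s_4)=1$, $\mathsf{M}^{(2)}_+(s_2)=\mathsf{M}^{(2)}_+(s_3)=0$.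
   Context: General probabilistic theory setting: a state space $\mathcal{S}$ is a compact convex subset of a finite-dimensional real vector space, embedded as a base of a closed generating proper cone in a vector space $V$, with unit effect $u$. Effects are linear functionals $e$ on $V$ with $0\le e\le1$ on $\mathcal{S}$; $\|f\|=\max_{s\in\mathcal{S}}|f(s)|$. A measurement with finite outcome set $\Omega$ is a map $x\mapsto\mathsf{M}_x$ to effects with $\sum_x\mathsf{M}_x=u$; a dichotomic measurement has outcome set $\{+,-\}$. For dichotomic $\mathsf{M}^{(1)},\mathsf{M}^{(2)}$, $\bar P(\mathsf{M}^{(1)},\mathsf{M}^{(2)})=\frac18\sum_{x,y\in\{+,-\}}\|\mathsf{M}^{(1)}_x+\mathsf{M}^{(2)}_y\|$. A measurement $\mathsf{T}$ is trivial if $\mathsf{T}_x=p_xu$ for a probability distribution $(p_x)$. Two measurements with outcome sets $\Omega_1,\Omega_2$ are compatible if there is a measurement $\mathsf{J}$ on $\Omega_1\times\Omega_2$ whose marginals are the two measurements. The degree of incompatibility $d(\mathsf{M}^{(1)},\mathsf{M}^{(2)})$ is the maximal $\lambda\in[0,1]$ such that $\lambda\mathsf{M}^{(1)}+(1-\lambda)\mathsf{T}^{(1)}$ and $\lambda\mathsf{M}^{(2)}+(1-\lambda)\mathsf{T}^{(2)}$ are compatible for some trivial $\mathsf{T}^{(1)},\mathsf{T}^{(2)}$; the measurements are maximally incompatible if $d(\mathsf{M}^{(1)},\mathsf{M}^{(2)})=\frac12$. *)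

From HB Require Import structures.
From mathcomp Require Import all_boot all_order all_algebra.
From mathcomp Require Import all_classical all_reals all_analysis.
Set Implicit Arguments. Unset Strict Implicit. Unset Printing Implicit Defensive.
Import Order.TTheory GRing.Theory Num.Theory.
Import numFieldNormedType.Exports.
Local Open Scope classical_set_scope.
Local Open Scope ring_scope.

(* The ambient vector space V is 'rV[R]_n; linear functionals on V are
   represented by column vectors f : 'cV[R]_n acting by  v |-> (v *m f) 0 0. *)
Definition ev (R : realType) (n : nat) (f : 'cV[R]_n) (v : 'rV[R]_n) : R :=
  (v *m f) 0 0.

(* S is a state space with unit effect u: S is a nonempty compact convex set,
   u = 1 on S (so S is a base of the cone C = {a s | a >= 0, s in S}), and the
   cone C is generating (V = C - C).  Closedness and properness of C follow
   from compactness of S and u = 1 on S. *)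
Definition state_space (R : realType) (n : nat) (S : set 'rV[R]_n)
    (u : 'cV[R]_n) : Prop :=
  [/\ S !=set0, compact S,
      (forall s t (l : R), S s -> S t -> 0 <= l <= 1 -> S (l *: s + (1 - l) *: t)),
      (forall s, S s -> ev u s = 1) &
      (forall v : 'rV[R]_n, exists (a b : R) (s t : 'rV[R]_n),
          [/\ 0 <= a, 0 <= b, S s, S t & v = a *: s - b *: t])].

Definition effect (R : realType) (n : nat) (S : set 'rV[R]_n) (e : 'cV[R]_n) : Prop :=
  forall s, S s -> 0 <= ev e s <= 1.

Definition measurement (R : realType) (n : nat) (S : set 'rV[R]_n) (u : 'cV[R]_n)
    (Omega : finType) (M : Omega -> 'cV[R]_n) : Prop :=
  (forall x, effect S (M x)) /\ \sum_(x : Omega) M x = u.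

(* dichotomic measurement: outcome set {+,-}, encoded as bool (true = +) *)
Definition dichotomic (R : realType) (n : nat) (S : set 'rV[R]_n) (u : 'cV[R]_n)
    (M : bool -> 'cV[R]_n) : Prop := measurement S u M.

(* ||f|| = max_{s in S} |f(s)| (S compact nonempty, so the sup is a max) *)
Definition fnorm (R : realType) (n : nat) (S : set 'rV[R]_n) (f : 'cV[R]_n) : R :=
  sup [set `|ev f s| | s in S].

Definition Pbar (R : realType) (n : nat) (S : set 'rV[R]_n)
    (M1 M2 : bool -> 'cV[R]_n) : R :=
  8^-1 * \sum_(x : bool) \sum_(y : bool) fnorm S (M1 x + M2 y).

Definition trivial_meas (R : realType) (n : nat) (u : 'cV[R]_n)
    (Omega : finType) (T : Omega -> 'cV[R]_n) : Prop :=
  exists p : Omega -> R,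
    [/\ (forall x, 0 <= p x), \sum_(x : Omega) p x = 1 & forall x, T x = p x *: u].

Definition compatible (R : realType) (n : nat) (S : set 'rV[R]_n) (u : 'cV[R]_n)
    (O1 O2 : finType) (M1 : O1 -> 'cV[R]_n) (M2 : O2 -> 'cV[R]_n) : Prop :=
  exists J : O1 * O2 -> 'cV[R]_n,
    [/\ measurement S u J,
        (forall x, \sum_(y : O2) J (x, y) = M1 x) &
        (forall y, \sum_(x : O1) J (x, y) = M2 y)].

Definition admissible_lambda (R : realType) (n : nat) (S : set 'rV[R]_n)
    (u : 'cV[R]_n) (O1 O2 : finType) (M1 : O1 -> 'cV[R]_n) (M2 : O2 -> 'cV[R]_n)
    (l : R) : Prop :=
  0 <= l <= 1 /\
  exists (T1 : O1 -> 'cV[R]_n) (T2 : O2 -> 'cV[R]_n),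
    [/\ trivial_meas u T1, trivial_meas u T2 &
        compatible S u (fun x => l *: M1 x + (1 - l) *: T1 x)
                       (fun y => l *: M2 y + (1 - l) *: T2 y)].

(* d(M1,M2) = 1/2, i.e. 1/2 is the maximal admissible lambda *)
Definition maximally_incompatible (R : realType) (n : nat) (S : set 'rV[R]_n)
    (u : 'cV[R]_n) (O1 O2 : finType) (M1 : O1 -> 'cV[R]_n) (M2 : O2 -> 'cV[R]_n)
    : Prop :=
  admissible_lambda S u M1 M2 (2^-1) /\
  forall l, admissible_lambda S u M1 M2 l -> l <= 2^-1.

Definition affinely_dependent4 (R : realType) (n : nat)
    (s1 s2 s3 s4 : 'rV[R]_n) : Prop :=
  exists a1 a2 a3 a4 : R,
    [/\ [|| a1 != 0, a2 != 0, a3 != 0 | a4 != 0],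
        a1 + a2 + a3 + a4 = 0 &
        a1 *: s1 + a2 *: s2 + a3 *: s3 + a4 *: s4 = 0].

From HB Require Import structures.
From mathcomp Require Import all_boot all_order all_algebra.
From mathcomp Require Import all_classical all_reals all_analysis.
From mathcomp Require Import ring lra.
Import Order.TTheory GRing.Theory Num.Theory.
Import numFieldNormedType.Exports.
Local Open Scope classical_set_scope.
Local Open Scope ring_scope.
Set Implicit Arguments. Unset Strict Implicit. Unset Printing Implicit Defensive.

(* Write a = M1(+) and b = M2(+).  After mixing both measurements with uniform
   noise at weight l, a joint measurement is determined by its (+,+) effect g,
   and exists iff A + B - u <= g, 0 <= g and g <= A, B for the noisy
   (+)-effects A, B; for l = 1/2 the choice g = (a + b)/4 works, so
   d(M1, M2) >= 1/2 always.
   If affinely dependent states s1, s2, s3, s4 sit at the corners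
   (a, b) = (1,1), (1,0), (0,0), (0,1), the relation is forced to be
   s1 - s2 + s3 - s4 = 0; evaluating g on it gives 2l - 1 <= 0, and these
   states attain ||M1_x + M2_y|| = 2 for all x, y, so P = 1.  Otherwise some
   face F_ab = {s in S | a(s) = a, b(s) = b} is empty, or 0 lies outside the
   compact convex set F11 - F10 + F00 - F01; its point d nearest to 0 gives a
   functional h with h >= m > 0 on F11, F00 and h <= -m on F10, F01.  By
   compactness, g = (l/2)(a + b) + delta h is then a joint effect for some
   l > 1/2. *)

Section LinearFunctionals.
Variables (R : realType) (n : nat).
Local Notation V := 'rV[R]_n.
Implicit Types (f g : 'cV[R]_n) (v w : V).

Lemma evDl f g v : ev (f + g) v = ev f v + ev g v.
Proof. by rewrite /ev mulmxDr mxE. Qed.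

Lemma evZl c f v : ev (c *: f) v = c * ev f v.
Proof. by rewrite /ev -scalemxAr mxE. Qed.

Lemma evNl f v : ev (- f) v = - ev f v.
Proof. by rewrite /ev mulmxN mxE. Qed.

Lemma evBl f g v : ev (f - g) v = ev f v - ev g v.
Proof. by rewrite evDl evNl. Qed.

Lemma ev0l v : ev 0 v = 0.
Proof. by rewrite /ev mulmx0 mxE. Qed.

Lemma evDr f v w : ev f (v + w) = ev f v + ev f w.
Proof. by rewrite /ev mulmxDl mxE. Qed.

Lemma evZr c f v : ev f (c *: v) = c * ev f v.
Proof. by rewrite /ev -scalemxAl mxE. Qed.

Lemma evNr f v : ev f (- v) = - ev f v.
Proof. by rewrite /ev mulNmx mxE. Qed.

Lemma evBr f v w : ev f (v - w) = ev f v - ev f w.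
Proof. by rewrite evDr evNr. Qed.

Lemma ev0r f : ev f 0 = 0.
Proof. by rewrite /ev mul0mx mxE. Qed.

Lemma evE f v : ev f v = \sum_j v 0 j * f j 0.
Proof. by rewrite /ev mxE. Qed.

Lemma ev_continuous f : continuous (ev f).
Proof.
have -> : ev f = (fun v => \sum_j v 0 j * f j 0) by apply/funext => v; rewrite evE.
apply: (@continuous_big _ _ +%R 0 xpredT); first exact: (@add_continuous R^o).
by move=> j _ v; apply: continuousM; [exact: coord_continuous | exact: cst_continuous].
Qed.

Definition dot (x y : V) : R := ev x^T y.

Lemma dotDl x y w : dot (x + y) w = dot x w + dot y w.
Proof. by rewrite /dot linearD evDl. Qed.

Lemma dotZl c x w : dot (c *: x) w = c * dot x w.
Proof. by rewrite /dot linearZ evZl. Qed.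

Lemma dotC x y : dot x y = dot y x.
Proof. by rewrite /dot !evE; apply: eq_bigr => j _; rewrite !mxE mulrC. Qed.

Lemma dotDr x y w : dot w (x + y) = dot w x + dot w y.
Proof. exact: evDr. Qed.

Lemma dotZr c x w : dot w (c *: x) = c * dot w x.
Proof. exact: evZr. Qed.

Lemma dot_ge0 x : 0 <= dot x x.
Proof. by rewrite /dot evE; apply: sumr_ge0 => j _; rewrite mxE -expr2 sqr_ge0. Qed.

Lemma dot_eq0 x : dot x x = 0 -> x = 0.
Proof.
rewrite /dot evE => /eqP; rewrite psumr_eq0 => [/allP x0|j _]; last first.
  by rewrite mxE -expr2 sqr_ge0.
apply/rowP => j; rewrite mxE; apply/eqP.
by have := x0 j (mem_index_enum j); rewrite mxE mulf_eq0 orbb.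
Qed.

Lemma dot_continuous : continuous (fun x => dot x x).
Proof.
have -> : (fun x => dot x x) = (fun x => \sum_j x 0 j * x 0 j).
  by apply/funext => x; rewrite /dot evE; apply: eq_bigr => j _; rewrite mxE.
apply: (@continuous_big _ _ +%R 0 xpredT); first exact: (@add_continuous R^o).
by move=> j _ x; apply: continuousM; exact: coord_continuous.
Qed.

Definition convex (A : set V) :=
  forall x y (l : R), A x -> A y -> 0 <= l <= 1 -> A (l *: x + (1 - l) *: y).

Lemma first_order_nonneg (c N : R) : 0 <= N ->
  (forall t, 0 < t <= 1 -> 0 <= 2 * t * c + t ^+ 2 * N) -> 0 <= c.
Proof.
move=> N0 H; rewrite leNgt; apply/negP => c0.
pose t := - c / (N - c).
have t0 : 0 < t by apply: divr_gt0; lra.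
have tNc : t * (N - c) = - c by rewrite /t mulrVK //; rewrite unitfE; lra.
have t1 : t <= 1 by rewrite ler_pdivrMr; lra.
have tc : 0 < t * - c by apply: mulr_gt0; lra.
have := H t ltac:(lra).
have -> : 2 * t * c + t ^+ 2 * N = t * (2 * c + t * c + t * (N - c)) by ring.
rewrite tNc pmulr_rge0 //; lra.
Qed.

Lemma dot_min_convex (D : set V) d : convex D -> D d ->
  (forall x, D x -> dot d d <= dot x x) -> forall x, D x -> dot d d <= dot d x.
Proof.
move=> cD Dd dmin x Dx.
have Dt t : 0 <= t <= 1 -> D (d + t *: (x - d)).
  have -> : d + t *: (x - d) = t *: x + (1 - t) *: d.
    by apply/rowP => j; rewrite !mxE; ring.
  by move=> t01; apply: cD.
suff : 0 <= dot d (x - d) by rewrite /dot evBr; lra.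
apply: (first_order_nonneg (dot_ge0 (x - d))) => t /andP[t0 t1].
have := dmin _ (Dt t ltac:(lra)); move: (x - d) => w.
rewrite !(dotDl, dotZl, dotDr, dotZr) (dotC w d); lra.
Qed.

Lemma ev_gap (S : set V) f g (c : R) : compact S ->
  (forall s, S s -> ev f s <= c -> 0 < ev g s) ->
  exists2 eta : R, 0 < eta & forall s, S s -> ev f s <= c -> eta <= ev g s.
Proof.
move=> cS gpos; pose K := S `&` ev f @^-1` [set x | x <= c].
have cK : compact K.
  apply: compact_closedI => //.
  by apply: (proj1 (continuous_closedP _)); [exact: ev_continuous | exact: closed_le].
have [[s0 Ks0]|K0] := pselect (K !=set0); last first.
  by exists 1 => // s Ss fs; exfalso; apply: K0; exists s.
have [s1 /set_mem[Ss1 fs1] s1min] :=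
  compact_EVT_min (ex_intro _ s0 Ks0) cK (continuous_subspaceT (ev_continuous (f := g))).
exists (ev g s1); first exact: gpos.
by move=> s Ss fs; apply: s1min; rewrite inE.
Qed.

Lemma ev_bounded (S : set V) f : compact S ->
  exists2 H : R, 0 < H & forall s, S s -> `|ev f s| <= H.
Proof.
move=> cS.
have cfS : compact (ev f @` S).
  exact: continuous_compact (continuous_subspaceT (ev_continuous (f := f))) cS.
have [M [_ HM]] := compact_bounded cfS.
exists (`|M| + 1); first by have := normr_ge0 M; lra.
move=> s Ss; apply: (HM (`|M| + 1)); last by exists s.
by have := ler_norm M; lra.
Qed.

Definition alt_sum4 (A1 A2 A3 A4 : set V) : set V :=
  [set p.1.1 - p.1.2 + p.2.1 - p.2.2 | p in (A1 `*` A2) `*` (A3 `*` A4)].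

Lemma compact_alt_sum4 (A1 A2 A3 A4 : set V) :
  compact A1 -> compact A2 -> compact A3 -> compact A4 ->
  compact (alt_sum4 A1 A2 A3 A4).
Proof.
move=> c1 c2 c3 c4; apply: continuous_compact; last first.
  by apply: compact_setX; apply: compact_setX.
apply: continuous_subspaceT => p.
have c11 : continuous (fun p : (V * V) * (V * V) => p.1.1).
  by move=> q; apply: continuous_comp; [exact: cvg_fst | exact: cvg_fst].
have c12 : continuous (fun p : (V * V) * (V * V) => p.1.2).
  by move=> q; apply: continuous_comp; [exact: cvg_fst | exact: cvg_snd].
have c21 : continuous (fun p : (V * V) * (V * V) => p.2.1).
  by move=> q; apply: continuous_comp; [exact: cvg_snd | exact: cvg_fst].
have c22 : continuous (fun p : (V * V) * (V * V) => p.2.2).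
  by move=> q; apply: continuous_comp; [exact: cvg_snd | exact: cvg_snd].
by apply: cvgB; [apply: cvgD; [apply: cvgB|]|]; [exact: c11 | exact: c12 | exact: c21 | exact: c22].
Qed.

Lemma convex_alt_sum4 (A1 A2 A3 A4 : set V) :
  convex A1 -> convex A2 -> convex A3 -> convex A4 ->
  convex (alt_sum4 A1 A2 A3 A4).
Proof.
move=> k1 k2 k3 k4 x y l [[[x1 x2] [x3 x4]] [[/= X1 X2] [/= X3 X4]] <-].
move=> [[[y1 y2] [y3 y4]] [[/= Y1 Y2] [/= Y3 Y4]] <-] l01.
exists ((l *: x1 + (1 - l) *: y1, l *: x2 + (1 - l) *: y2),
        (l *: x3 + (1 - l) *: y3, l *: x4 + (1 - l) *: y4)).
  by split; split; [exact: k1 | exact: k2 | exact: k3 | exact: k4].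
by apply/rowP => j; rewrite /= !mxE; ring.
Qed.

End LinearFunctionals.

Section Corners.
Variables (R : realType) (n : nat).
Local Notation V := 'rV[R]_n.
Implicit Types (S : set V) (a b h : 'cV[R]_n).

Definition square S a b :=
  exists s1 s2 s3 s4 : V,
    [/\ [/\ S s1, S s2, S s3 & S s4], affinely_dependent4 s1 s2 s3 s4,
        [/\ ev a s1 = 1, ev a s2 = 1, ev a s3 = 0 & ev a s4 = 0] &
        [/\ ev b s1 = 1, ev b s4 = 1, ev b s2 = 0 & ev b s3 = 0]].

Lemma parallelogram_affinely_dependent4 (s1 s2 s3 s4 : V) :
  s1 - s2 + s3 - s4 = 0 -> affinely_dependent4 s1 s2 s3 s4.
Proof.
move=> par; exists 1, (-1), 1, (-1); split; first by rewrite oner_neq0.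
  by ring.
by rewrite -par; apply/rowP => j; rewrite !mxE; ring.
Qed.

(* Evaluating the affine relation on a and b forces its coefficients to be
   proportional to (1, -1, 1, -1). *)
Lemma corners_parallelogram a b (s1 s2 s3 s4 : V) :
  affinely_dependent4 s1 s2 s3 s4 ->
  [/\ ev a s1 = 1, ev a s2 = 1, ev a s3 = 0 & ev a s4 = 0] ->
  [/\ ev b s1 = 1, ev b s4 = 1, ev b s2 = 0 & ev b s3 = 0] ->
  s1 - s2 + s3 - s4 = 0.
Proof.
move=> [c1 [c2 [c3 [c4 [nz sum0 comb0]]]]] [a1 a2 a3 a4] [b1 b4 b2 b3].
have rel f : c1 * ev f s1 + c2 * ev f s2 + c3 * ev f s3 + c4 * ev f s4 = 0.
  by rewrite -(ev0r f) -comb0 !(evDr, evZr).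
have := rel a; have := rel b; rewrite a1 a2 a3 a4 b1 b2 b3 b4 => relb rela.
have [e2 e3 e4] : [/\ c2 = - c1, c3 = c1 & c4 = - c1] by split; lra.
rewrite {}e2 {}e3 {}e4 in nz comb0.
have c1n0 : c1 != 0 by move: nz; rewrite !oppr_eq0 !orbb.
apply: (scalerI c1n0); rewrite scaler0 -comb0.
by apply/rowP => j; rewrite !mxE; ring.
Qed.

Definition face S a b (al be : R) : set V :=
  S `&` ev a @^-1` [set al] `&` ev b @^-1` [set be].

Lemma faceP S a b al be s :
  face S a b al be s <-> [/\ S s, ev a s = al & ev b s = be].
Proof. by split => [[[]]|[]]. Qed.

Lemma compact_face S a b al be : compact S -> compact (face S a b al be).
Proof.
have closed_level f c : closed (ev f @^-1` [set c]).
  by apply: (proj1 (continuous_closedP _)); [exact: ev_continuous | exact: closed_eq].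
by move=> cS; apply: compact_closedI; first exact: compact_closedI.
Qed.

Lemma convex_face S a b al be : convex S -> convex (face S a b al be).
Proof.
move=> cS s t l /faceP[Ss sa sb] /faceP[St ta tb] l01; apply/faceP.
by rewrite !evDr !evZr sa sb ta tb; split; [exact: cS | ring | ring].
Qed.

Definition separating S a b h (m : R) :=
  [/\ forall s, face S a b 1 1 s -> m <= ev h s,
      forall s, face S a b 0 0 s -> m <= ev h s,
      forall s, face S a b 1 0 s -> ev h s <= - m &
      forall s, face S a b 0 1 s -> ev h s <= - m].

Lemma separating_affine S (u : 'cV[R]_n) a b (phi : 'cV[R]_n) (k0 k1 k2 m : R) :
  (forall s, S s -> ev u s = 1) ->
  (forall s, face S a b 1 1 s -> m <= ev phi s + k0 + k1 + k2) ->
  (forall s, face S a b 0 0 s -> m <= ev phi s + k0) ->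
  (forall s, face S a b 1 0 s -> ev phi s + k0 + k1 <= - m) ->
  (forall s, face S a b 0 1 s -> ev phi s + k0 + k2 <= - m) ->
  separating S a b (phi + k0 *: u + k1 *: a + k2 *: b) m.
Proof.
move=> Su h11 h00 h10 h01.
by split=> s Fs; have /faceP[Ss sa sb] := Fs; rewrite !(evDl, evZl) Su // sa sb;
  [have := h11 s Fs | have := h00 s Fs | have := h10 s Fs | have := h01 s Fs]; lra.
Qed.

Lemma separating_of_empty_face S (u : 'cV[R]_n) a b :
  (forall s, S s -> ev u s = 1) ->
  ~ [/\ face S a b 1 1 !=set0, face S a b 1 0 !=set0,
        face S a b 0 0 !=set0 & face S a b 0 1 !=set0] ->
  exists h, separating S a b h 1.
Proof.
move=> Su full.
have [E|E] := pselect (face S a b 1 1 !=set0); last first.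
  exists (0 + 1 *: u + (-2) *: a + (-2) *: b).
  by apply: separating_affine => // s Fs; rewrite ev0l; try lra; case: E; exists s.
have [E'|E'] := pselect (face S a b 1 0 !=set0); last first.
  exists (0 + 1 *: u + 2 *: a + (-2) *: b).
  by apply: separating_affine => // s Fs; rewrite ev0l; try lra; case: E'; exists s.
have [E''|E''] := pselect (face S a b 0 0 !=set0); last first.
  exists (0 + (-3) *: u + 2 *: a + 2 *: b).
  by apply: separating_affine => // s Fs; rewrite ev0l; try lra; case: E''; exists s.
exists (0 + 1 *: u + (-2) *: a + 2 *: b).
apply: separating_affine => // s Fs; rewrite ev0l; try lra.
by case: full; split => //; exists s.
Qed.

Lemma square_or_separating S (u : 'cV[R]_n) a b : state_space S u ->
  square S a b \/ exists h (m : R), 0 < m /\ separating S a b h m.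
Proof.
move=> [_ cS convS Su _]; pose F := face S a b.
have [[[t1 F1] [t2 F2] [t3 F3] [t4 F4]]|empty] :=
  pselect [/\ F 1 1 !=set0, F 1 0 !=set0, F 0 0 !=set0 & F 0 1 !=set0]; last first.
  by right; have [h sep] := separating_of_empty_face Su empty; exists h, 1.
pose D := alt_sum4 (F 1 1) (F 1 0) (F 0 0) (F 0 1).
have [d /set_mem Dd dmin] : exists2 d, d \in D & forall x, x \in D -> dot d d <= dot x x.
  apply: compact_EVT_min; last by apply: continuous_subspaceT; exact: dot_continuous.
    by exists (t1 - t2 + t3 - t4), ((t1, t2), (t3, t4)).
  by apply: compact_alt_sum4; apply: compact_face.
have convF al be : convex (F al be) by exact: convex_face.
have dmin_dot := dot_min_convex (convex_alt_sum4 (convF 1 1) (convF 1 0) (convF 0 0) (convF 0 1))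
  Dd (fun x Dx => dmin x (mem_set Dx)).
case: Dd => -[[s1 s2] [s3 s4]] [[/= G1 G2] [/= G3 G4]] dE.
have [d0|dn0] := eqVneq d 0.
  left; exists s1, s2, s3, s4.
  move: G1 G2 G3 G4 => /faceP[? ? ?] /faceP[? ? ?] /faceP[? ? ?] /faceP[? ? ?].
  by split => //; apply: parallelogram_affinely_dependent4; rewrite dE.
right; pose m := dot d d / 4.
have m0 : 0 < m.
  rewrite /m; apply: divr_gt0 => //; rewrite lt_def dot_ge0 andbT.
  by apply: contra_neq dn0; exact: dot_eq0.
have alt x1 x2 x3 x4 : dot d (x1 - x2 + x3 - x4) = dot d x1 - dot d x2 + dot d x3 - dot d x4.
  by rewrite /dot !(evBr, evDr).
have dD x1 x2 x3 x4 : F 1 1 x1 -> F 1 0 x2 -> F 0 0 x3 -> F 0 1 x4 ->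
    4 * m <= dot d x1 - dot d x2 + dot d x3 - dot d x4.
  move=> X1 X2 X3 X4; rewrite -alt /m mulrC divfK ?pnatr_eq0 //.
  by apply: dmin_dot; exists ((x1, x2), (x3, x4)).
have dd : 4 * m = dot d s1 - dot d s2 + dot d s3 - dot d s4.
  by rewrite -alt dE /m mulrC divfK ?pnatr_eq0.
exists (d^T + (m - dot d s3) *: u + (dot d s3 - dot d s2 - 2 * m) *: a
             + (dot d s3 - dot d s4 - 2 * m) *: b), m.
split => //; apply: separating_affine => // s Fs; rewrite -/(dot d s).
- by have := dD _ _ _ _ Fs G2 G3 G4; lra.
- by have := dD _ _ _ _ G1 G2 Fs G4; lra.
- by have := dD _ _ _ _ G1 Fs G3 G4; lra.
- by have := dD _ _ _ _ G1 G2 G3 Fs; lra.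
Qed.

End Corners.

Section Compatibility.
Variables (R : realType) (n : nat) (S : set 'rV[R]_n) (u : 'cV[R]_n).
Implicit Types (M N : bool -> 'cV[R]_n) (a b g : 'cV[R]_n).

Lemma sum_bool2 (F : bool * bool -> 'cV[R]_n) :
  \sum_p F p = F (true, true) + F (true, false) + F (false, true) + F (false, false).
Proof.
rewrite (eq_bigr (fun p => F (p.1, p.2))); last by case.
by rewrite -(pair_bigA _ (fun x y => F (x, y))) !big_bool /= addrA.
Qed.

Lemma dichotomic_false M : dichotomic S u M -> M false = u - M true.
Proof. by move=> [_]; rewrite big_bool /= => <-; rewrite [M true + _]addrC addrK. Qed.

Lemma dichotomic_range M x s : dichotomic S u M -> S s -> 0 <= ev (M x) s <= 1.
Proof. by move=> [eff _] Ss; exact: eff. Qed.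

(* g is the (+, +) effect of a joint measurement of the dichotomic
   measurements with (+)-effects a and b. *)
Definition joint_effect a b g := forall s, S s ->
  [/\ 0 <= ev g s, ev g s <= ev a s, ev g s <= ev b s &
      ev a s + ev b s - ev u s <= ev g s].

Lemma compatible_joint_effect N1 N2 :
  compatible S u N1 N2 -> exists g, joint_effect (N1 true) (N2 true) g.
Proof.
move=> [J [[Jeff Jsum] J1 J2]]; exists (J (true, true)) => s Ss.
have J0 x y : 0 <= ev (J (x, y)) s by have /andP[] := Jeff (x, y) s Ss.
move: (J1 true) (J2 true) Jsum; rewrite !big_bool sum_bool2 /= => <- <- <-.
rewrite !evDl; have := J0 true true; have := J0 true false.
by have := J0 false true; have := J0 false false; split; lra.
Qed.

Lemma joint_effect_compatible N1 N2 g : (forall s, S s -> ev u s = 1) ->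
  N1 false = u - N1 true -> N2 false = u - N2 true ->
  joint_effect (N1 true) (N2 true) g -> compatible S u N1 N2.
Proof.
move=> Su N1f N2f gJ.
pose J p := match p with
  | (true, true) => g | (true, false) => N1 true - g
  | (false, true) => N2 true - g | (false, false) => u - N1 true - N2 true + g end.
exists J; split; first split.
- move=> [[] []] s Ss /=; have := gJ s Ss; rewrite Su // => -[? ? ? ?];
    rewrite ?(evDl, evBl, evNl) ?Su //; apply/andP; split; lra.
- by rewrite sum_bool2 /=; apply/matrixP => i j; rewrite !mxE; ring.
- by case; rewrite big_bool /= ?N1f; apply/matrixP => i j; rewrite !mxE; ring.
- by case; rewrite big_bool /= ?N2f; apply/matrixP => i j; rewrite !mxE; ring.
Qed.

Lemma admissible_uniform_noise M1 M2 (l : R) g : (forall s, S s -> ev u s = 1) ->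
  dichotomic S u M1 -> dichotomic S u M2 -> 0 <= l <= 1 ->
  (forall s, S s ->
    [/\ 0 <= ev g s, ev g s <= l * ev (M1 true) s + (1 - l) / 2,
        ev g s <= l * ev (M2 true) s + (1 - l) / 2 &
        l * (ev (M1 true) s + ev (M2 true) s) - l <= ev g s]) ->
  admissible_lambda S u M1 M2 l.
Proof.
move=> Su D1 D2 l01 gb; split => //.
have T : trivial_meas u (fun _ : bool => 2^-1 *: u).
  by exists (fun _ => 2^-1); split => //; rewrite big_bool /=; lra.
exists (fun _ => 2^-1 *: u), (fun _ => 2^-1 *: u); split => //.
apply: (joint_effect_compatible (g := g) Su).
- by rewrite (dichotomic_false D1); apply/matrixP => i j; rewrite !mxE; field.
- by rewrite (dichotomic_false D2); apply/matrixP => i j; rewrite !mxE; field.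
- move=> s Ss; rewrite !(evDl, evZl) Su //; have [? ? ? ?] := gb s Ss.
  by split; lra.
Qed.

Lemma admissible_half M1 M2 : (forall s, S s -> ev u s = 1) ->
  dichotomic S u M1 -> dichotomic S u M2 -> admissible_lambda S u M1 M2 2^-1.
Proof.
move=> Su D1 D2.
apply: (admissible_uniform_noise (g := 4^-1 *: (M1 true + M2 true))) => //; first lra.
move=> s Ss; rewrite evZl evDl.
have := dichotomic_range true D1 Ss; have := dichotomic_range true D2 Ss.
by move=> /andP[? ?] /andP[? ?]; split; lra.
Qed.

Lemma admissible_le_half M1 M2 (l : R) : (forall s, S s -> ev u s = 1) ->
  square S (M1 true) (M2 true) -> admissible_lambda S u M1 M2 l -> l <= 2^-1.
Proof.
move=> Su [s1 [s2 [s3 [s4 [[S1 S2 S3 S4] dep a1234 b1423]]]]].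
have par := corners_parallelogram dep a1234 b1423.
move: a1234 b1423 => [a1 a2 a3 a4] [b1 b4 b2 b3].
move=> [_ [T1 [T2 [[p [_ _ Tp]] [q [_ _ Tq]] /compatible_joint_effect[g gJ]]]]].
have := gJ s1 S1; have := gJ s2 S2; have := gJ s3 S3; have := gJ s4 S4.
rewrite /= Tp Tq !(evDl, evZl) !Su // a1 a2 a3 a4 b1 b2 b3 b4.
have : ev g s1 - ev g s2 + ev g s3 - ev g s4 = 0 by rewrite -!(evBr, evDr) par ev0r.
by move=> ? [_ ? _ _] [? _ _ _] [_ _ ? _] [_ _ _ ?]; lra.
Qed.

End Compatibility.

Section Perturbation.
Variable R : realType.

Lemma diag_margin (p z d e eta : R) : 0 <= p -> 0 <= d -> 0 <= e ->
  d * `|z| <= eta / 8 -> (z <= 0 -> eta <= p) -> 0 <= (2^-1 + e) * p / 2 + d * z.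
Proof.
move=> p0 d0 e0 dz pz; have ep := mulr_ge0 e0 p0.
have /andP[zl zu] : - `|z| <= z <= `|z| by rewrite -ler_norml.
have [zn|zp] := lerP z 0; last by have := mulr_ge0 d0 (ltW zp); lra.
have : 0 <= d * (`|z| + z) by apply: mulr_ge0; lra.
by have := pz zn; lra.
Qed.

Lemma antidiag_margin (q z d e eta m : R) : 0 <= q -> 0 <= d -> 0 <= e ->
  d * `|z| <= eta / 8 -> e <= eta / 8 -> e <= d * m / 2 ->
  (- (m / 2) <= z -> eta <= q) -> 0 <= (2^-1 + e) * q / 2 - e - d * z.
Proof.
move=> q0 d0 e0 dz e1 e2 qz; have eq := mulr_ge0 e0 q0.
have /andP[zl zu] : - `|z| <= z <= `|z| by rewrite -ler_norml.
have [zm|zm] := lerP (- (m / 2)) z.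
  have : 0 <= d * (`|z| - z) by apply: mulr_ge0; lra.
  by have := qz zm; lra.
have : 0 <= d * (- (m / 2) - z) by apply: mulr_ge0; lra.
lra.
Qed.

Lemma separating_gaps n (S : set 'rV[R]_n) u a b h (m : R) :
  state_space S u -> effect S a -> effect S b -> 0 < m -> separating S a b h m ->
  exists2 eta, 0 < eta & forall s, S s ->
    [/\ ev h s <= 0 -> eta <= ev a s + ev b s,
        ev h s <= 0 -> eta <= 2 - ev a s - ev b s,
        - (m / 2) <= ev h s -> eta <= 1 + ev a s - ev b s &
        - (m / 2) <= ev h s -> eta <= 1 - ev a s + ev b s].
Proof.
move=> [_ cS _ Su _] ea eb m0 [h11 h00 h10 h01].
have ab s : S s -> 0 <= ev a s <= 1 /\ 0 <= ev b s <= 1 by move=> Ss; split; [exact: ea | exact: eb].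
have [eA eA0 gapA] : exists2 eta, 0 < eta &
    forall s, S s -> ev h s <= 0 -> eta <= ev (a + b) s.
  apply: ev_gap => // s Ss hs; rewrite evDl ltNge; apply/negP => abs.
  have [/andP[? ?] /andP[? ?]] := ab s Ss.
  suff : face S a b 0 0 s by move/h00; lra.
  by apply/faceP; split => //; lra.
have [eD eD0 gapD] : exists2 eta, 0 < eta &
    forall s, S s -> ev h s <= 0 -> eta <= ev (2 *: u - (a + b)) s.
  apply: ev_gap => // s Ss hs; rewrite !(evBl, evDl, evZl) Su // ltNge; apply/negP => abs.
  have [/andP[? ?] /andP[? ?]] := ab s Ss.
  suff : face S a b 1 1 s by move/h11; lra.
  by apply/faceP; split => //; lra.
have [eB eB0 gapB] : exists2 eta, 0 < eta &
    forall s, S s -> ev (- h) s <= m / 2 -> eta <= ev (u + a - b) s.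
  apply: ev_gap => // s Ss; rewrite !(evBl, evDl, evNl) Su // ltNge => hs; apply/negP => abs.
  have [/andP[? ?] /andP[? ?]] := ab s Ss.
  suff : face S a b 0 1 s by move/h01; lra.
  by apply/faceP; split => //; lra.
have [eC eC0 gapC] : exists2 eta, 0 < eta &
    forall s, S s -> ev (- h) s <= m / 2 -> eta <= ev (u - a + b) s.
  apply: ev_gap => // s Ss; rewrite !(evBl, evDl, evNl) Su // ltNge => hs; apply/negP => abs.
  have [/andP[? ?] /andP[? ?]] := ab s Ss.
  suff : face S a b 1 0 s by move/h10; lra.
  by apply/faceP; split => //; lra.
pose eta := Num.min (Num.min eA eD) (Num.min eB eC).
have [? ? ? ?] : [/\ eta <= eA, eta <= eD, eta <= eB & eta <= eC].
  by rewrite !ge_min !lexx !orbT.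
exists eta; first by rewrite !lt_min eA0 eD0 eB0 eC0.
move=> s Ss; move: (gapA s Ss) (gapD s Ss) (gapB s Ss) (gapC s Ss).
rewrite !(evBl, evDl, evZl, evNl) Su // => gA gD gB gC.
by split => hs; [have := gA hs | have := gD hs | have := gB ltac:(lra) | have := gC ltac:(lra)];
  lra.
Qed.

Lemma separating_admissible n (S : set 'rV[R]_n) u M1 M2 h (m : R) :
  state_space S u -> dichotomic S u M1 -> dichotomic S u M2 -> 0 < m ->
  separating S (M1 true) (M2 true) h m ->
  exists2 l, 2^-1 < l & admissible_lambda S u M1 M2 l.
Proof.
move=> SS D1 D2 m0 sep; have [_ cS _ Su _] := SS.
have [eta eta0 gap] := separating_gaps SS (D1.1 true) (D2.1 true) m0 sep.
have [H H0 hH] := ev_bounded h cS.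
pose d := eta / (8 * H).
have d0 : 0 < d by apply: divr_gt0; lra.
have dh s : S s -> d * `|ev h s| <= eta / 8.
  move=> Ss; have -> : eta / 8 = d * H by rewrite /d; field; lra.
  by rewrite ler_pM2l //; exact: hH.
pose e := Num.min (Num.min (eta / 8) (d * m / 2)) 2^-1.
have dm0 : 0 < d * m / 2 by apply: divr_gt0 => //; exact: mulr_gt0.
have e0 : 0 < e by rewrite !lt_min dm0 andbT; apply/andP; split; lra.
have [e1 e2 e3] : [/\ e <= eta / 8, e <= d * m / 2 & e <= 2^-1].
  by rewrite !ge_min !lexx !orbT.
exists (2^-1 + e); first lra.
apply: (admissible_uniform_noise (g := ((2^-1 + e) / 2) *: (M1 true + M2 true) + d *: h) Su D1 D2).
  lra.
move=> s Ss; move: (D1.1 true s Ss) (D2.1 true s Ss) (gap s Ss) (dh s Ss).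
rewrite !(evDl, evZl).
move: (ev (M1 true) s) (ev (M2 true) s) (ev h s) => x y z /andP[x0 x1] /andP[y0 y1] [gA gD gB gC] dz.
have := diag_margin (p := x + y) (z := z) (eta := eta) ltac:(lra) (ltW d0) (ltW e0) dz gA.
have := diag_margin (p := 2 - x - y) (z := z) ltac:(lra) (ltW d0) (ltW e0) dz gD.
have := antidiag_margin (q := 1 + x - y) ltac:(lra) (ltW d0) (ltW e0) dz e1 e2 gB.
have := antidiag_margin (q := 1 - x + y) ltac:(lra) (ltW d0) (ltW e0) dz e1 e2 gC.
by split; lra.
Qed.

End Perturbation.

Section Pbar.
Variables (R : realType) (n : nat) (S : set 'rV[R]_n).

Lemma fnorm_attained (f : 'cV[R]_n) (c : R) :
  (forall s, S s -> `|ev f s| <= c) -> (exists2 s, S s & `|ev f s| = c) ->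
  fnorm S f = c.
Proof.
move=> ub [s0 Ss0 fs0]; rewrite -fs0 in ub *.
have ne : [set `|ev f s| | s in S] !=set0 by exists `|ev f s0|, s0.
have ubA : ubound [set `|ev f s| | s in S] `|ev f s0| by move=> _ [s Ss <-]; exact: ub.
apply/eqP; rewrite eq_le ge_sup //=.
by apply: sup_upper_bound; [split; [|exists `|ev f s0|] | exists s0].
Qed.

Lemma square_Pbar u M1 M2 : (forall s, S s -> ev u s = 1) ->
  dichotomic S u M1 -> dichotomic S u M2 ->
  square S (M1 true) (M2 true) -> Pbar S M1 M2 = 1.
Proof.
move=> Su D1 D2 [s1 [s2 [s3 [s4 [[S1 S2 S3 S4] _ [a1 a2 a3 a4] [b1 b4 b2 b3]]]]]].
have corner x y : exists2 s, S s & ev (M1 x) s + ev (M2 y) s = 2.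
  by case: x; case: y; [exists s1 | exists s2 | exists s4 | exists s3];
    rewrite // ?(dichotomic_false D1) ?(dichotomic_false D2) ?evBl ?Su //
      ?a1 ?a2 ?a3 ?a4 ?b1 ?b2 ?b3 ?b4; lra.
have norm2 x y : fnorm S (M1 x + M2 y) = 2.
  apply: fnorm_attained => [s Ss|]; last first.
    by have [s Ss sum2] := corner x y; exists s; rewrite // evDl sum2 ger0_norm.
  have := dichotomic_range x D1 Ss; have := dichotomic_range y D2 Ss.
  by rewrite evDl ler_norml => /andP[? ?] /andP[? ?]; apply/andP; split; lra.
by rewrite /Pbar !big_bool /= !norm2; lra.
Qed.

End Pbar.

Theorem proposition7 (R : realType) (n : nat) (S : set 'rV[R]_n) (u : 'cV[R]_n)
    (M1 M2 : bool -> 'cV[R]_n) :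
  state_space S u -> dichotomic S u M1 -> dichotomic S u M2 ->
  (maximally_incompatible S u M1 M2 <->
   (Pbar S M1 M2 = 1 /\
    exists s1 s2 s3 s4 : 'rV[R]_n,
      [/\ [/\ S s1, S s2, S s3 & S s4], affinely_dependent4 s1 s2 s3 s4,
          [/\ ev (M1 true) s1 = 1, ev (M1 true) s2 = 1,
              ev (M1 true) s3 = 0 & ev (M1 true) s4 = 0] &
          [/\ ev (M2 true) s1 = 1, ev (M2 true) s4 = 1,
              ev (M2 true) s2 = 0 & ev (M2 true) s3 = 0]])).
Proof.
move=> SS D1 D2; have [_ _ _ Su _] := SS; split.
- move=> [_ le_half].
  have [sq|[h [m [m0 sep]]]] := square_or_separating (M1 true) (M2 true) SS.
    by split; [exact: square_Pbar Su D1 D2 sq | exact: sq].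
  have [l gt_half adm] := separating_admissible SS D1 D2 m0 sep.
  by have := le_half l adm; lra.
- move=> [_ sq]; split; first exact: admissible_half.
  by move=> l; exact: admissible_le_half sq.
Qed.
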